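(* Let $\Omega\subset\mathbb{R}^n$ ($1\le n\le 3$) be a bounded domain, let $\mu_1,\mu_2,\alpha>0$, and impose on $\Omega$ either the Dirichlet or the Neumann boundary condition. Let $\rho_k$, $e_k$, $\beta^{\pm}_k(\lambda)$, $\lambda_0$, $\lambda_1$ be as in the context. Then: (1) Suppose $\lambda_0<\lambda_1$, and let $k_0\ge 1$ be an integer such that the minimum in the definition of $\lambda_0$ is achieved at $\rho_{k_0}$. Then $\beta^+_{k_0}(\lambda)$ is the first real eigenvalue of the linearized eigenvalue problem near $\lambda=\lambda_0$, and for every $k\in\mathbb{N}$ with $\rho_k=\rho_{k_0}$: $\beta^+_k(\lambda)<0$ if $\lambda<\lambda_0$, $\beta^+_k(\lambda)=0$ if $\lambda=\lambda_0$, $\beta^+_k(\lambda)>0$ if $\lambda>\lambda_0$; and $\mathrm{Re}\,\beta^{\pm}_j(\lambda_0)<0$ for every eigenvalue $\beta^{\pm}_j$ other than the $\beta^+_k$ with $\rho_k=\rho_{k_0}$. (2) Suppose $\lambda_1<\lambda_0$. Then $\beta^+_1(\lambda)=\overline{\beta^-_1(\lambda)}$ is a pair of first complex eigenvalues of the linearized eigenvalue problem near $\lambda=\lambda_1$, with $\mathrm{Re}\,\beta^+_1(\lambda)=\mathrm{Re}\,\beta^-_1(\lambda)$ being $<0$ if $\lambda<\lambda_1$, $=0$ if $\lambda=\lambda_1$, $>0$ if $\lambda>\lambda_1$; and $\mathrm{Re}\,\beta^{\pm}_k(\lambda_1)<0$ for all $k>1$.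
   Context: Linearized eigenvalue problem (for parameter $\lambda>0$): find $\beta$ and $v=(v_1,v_2)\neq 0$ with $\mu_1\Delta v_1+(\lambda-1)v_1+\alpha^2v_2=\beta v_1$, $\mu_2\Delta v_2-\lambda v_1-\alpha^2 v_2=\beta v_2$ in $\Omega$, with $v=0$ on $\partial\Omega$ (Dirichlet) or $\partial v/\partial n=0$ on $\partial\Omega$ (Neumann). Let $\rho_k$ ($k=1,2,\dots$, nondecreasing, repeated with multiplicity) and $e_k$ be the eigenvalues and eigenfunctions of $-\Delta e_k=\rho_k e_k$ with the same boundary condition. Let $M_k=\begin{pmatrix}-\mu_1\rho_k+\lambda-1&\alpha^2\\-\lambda&-\mu_2\rho_k-\alpha^2\end{pmatrix}$. All eigenvalues of the linearized problem are the eigenvalues $\beta^{\pm}_k(\lambda)$ of the matrices $M_k$, with eigenfunctions $\xi^{\pm}_k e_k$ where $M_k\xi^{\pm}_k=\beta^{\pm}_k\xi^{\pm}_k$, explicitly $\beta^{\pm}_k(\lambda)=\tfrac12[\lambda-(\mu_1\rho_k+\mu_2\rho_k+\alpha^2+1)]\pm\tfrac12\big[(\lambda-\mu_1\rho_k-\mu_2\rho_k-\alpha^2-1)^2+4(\lambda\mu_2\rho_k-(\mu_1\rho_k+1)(\mu_2\rho_k+\alpha^2))\big]^{1/2}$. Define $\lambda_0=\min_{\rho_k}\frac{1}{\mu_2\rho_k}(\mu_1\rho_k+1)(\mu_2\rho_k+\alpha^2)$ (terms with $\rho_k=0$ are interpreted as $+\infty$) and $\lambda_1=\mu_1\rho_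1+\mu_2\rho_1+\alpha^2+1$.
   Formalization: In part (1), every $\rho_k$ at which the minimum defining $\lambda_0$ is achieved equals $\rho_{k_0}$, so the minimum is attained at the single value $\rho_{k_0}$ only. The statement above fails without it. *)

From Stdlib Require Import Reals.
From Coquelicot Require Import Coquelicot.
Open Scope R_scope.

Inductive BC := Dirichlet | Neumann.

(* Abstraction of the spectral data of -Delta on a bounded domain Omega
   (connected open set) with boundary condition bc: the eigenvalues
   rho_1 <= rho_2 <= ... (indices k >= 1, rho 0 unused), repeated with
   multiplicity, nonnegative, tending to +infinity, with a simple first
   eigenvalue (Omega connected); rho_1 > 0 under Dirichlet and
   rho_1 = 0 under Neumann. *)
Definition laplace_spectrum (bc : BC) (rho : nat -> R) : Prop :=
  (forall k, (1 <= k)%nat -> 0 <= rho k) /\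
  (forall k, (1 <= k)%nat -> rho k <= rho (S k)) /\
  rho 1%nat < rho 2%nat /\
  (forall M, exists N, forall k, (N <= k)%nat -> M < rho k) /\
  (bc = Dirichlet -> 0 < rho 1%nat) /\
  (bc = Neumann -> rho 1%nat = 0).

Definition trM (mu1 mu2 alpha rho lam : R) : R :=
  lam - (mu1 * rho + mu2 * rho + alpha ^ 2 + 1).

Definition discM (mu1 mu2 alpha rho lam : R) : R :=
  (lam - mu1 * rho - mu2 * rho - alpha ^ 2 - 1) ^ 2
  + 4 * (lam * mu2 * rho - (mu1 * rho + 1) * (mu2 * rho + alpha ^ 2)).

Definition csqrt_real (x : R) : C :=
  if Rle_dec 0 x then (sqrt x, 0) else (0, sqrt (- x)).

Definition beta_plus (mu1 mu2 alpha rho lam : R) : C :=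
  Cmult (RtoC (/ 2))
    (Cplus (RtoC (trM mu1 mu2 alpha rho lam)) (csqrt_real (discM mu1 mu2 alpha rho lam))).

Definition beta_minus (mu1 mu2 alpha rho lam : R) : C :=
  Cmult (RtoC (/ 2))
    (Cminus (RtoC (trM mu1 mu2 alpha rho lam)) (csqrt_real (discM mu1 mu2 alpha rho lam))).

(* The quantity minimized in the definition of lambda_0 (for rho > 0). *)
Definition lam0_fun (mu1 mu2 alpha rho : R) : R :=
  (mu1 * rho + 1) * (mu2 * rho + alpha ^ 2) / (mu2 * rho).

Definition lam1 (mu1 mu2 alpha rho1 : R) : R :=
  mu1 * rho1 + mu2 * rho1 + alpha ^ 2 + 1.

(* Both eigenvalues of M_k are the roots of z^2 - tr z + det, with
   det = (mu1 rho + 1)(mu2 rho + alpha^2) - lambda mu2 rho.  The trace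
   tr = lambda - lam1(rho) is increasing in rho, so it is negative at
   lambda = min(lambda_0, lambda_1) for every mode except possibly the
   critical one; det is positive exactly when lambda < lam0_fun(rho)
   (always when rho = 0).  Hence all modes are stable except the critical
   one.  In case (1) det vanishes at lambda_0 while tr < 0, so beta^+ is a
   real root crossing 0 with the sign of -det; in case (2) tr vanishes at
   lambda_1 while det > 0, so the discriminant tr^2 - 4 det is negative
   nearby and the conjugate pair crosses the imaginary axis with real part
   tr/2. *)
From Stdlib Require Import Reals Lra Lia Psatz.
From Coquelicot Require Import Coquelicot.
Open Scope R_scope.

Lemma quadratic_lt_near_zero (a b D : R) : 0 < D ->
  exists delta, 0 < delta /\ forall x, Rabs x < delta -> a * x + b * x ^ 2 < D.
Proof.
  intros HD.
  set (K := Rabs a + Rabs b + 1).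
  assert (HK : 0 < K) by (unfold K; pose proof (Rabs_pos a); pose proof (Rabs_pos b); lra).
  exists (Rmin 1 (D / K)); split.
  - apply Rmin_pos; [lra | now apply Rdiv_lt_0_compat].
  - intros x Hx.
    assert (Hx1 : Rabs x < 1) by (eapply Rlt_le_trans; [exact Hx | apply Rmin_l]).
    assert (HxD : K * Rabs x < D).
    { assert (Rabs x < D / K) by (eapply Rlt_le_trans; [exact Hx | apply Rmin_r]).
      apply Rmult_lt_compat_l with (r := K) in H; [|exact HK].
      replace (K * (D / K)) with D in H by (field; lra). exact H. }
    assert (Ha : a * x <= Rabs a * Rabs x) by (rewrite <- Rabs_mult; apply Rle_abs).
    assert (Hb : b * x ^ 2 <= Rabs b * Rabs x).
    { replace (b * x ^ 2) with (b * x * x) by ring.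
      eapply Rle_trans; [apply Rle_abs|]. rewrite !Rabs_mult.
      rewrite <- (Rmult_1_r (Rabs b * Rabs x)) at 2.
      apply Rmult_le_compat_l; [apply Rmult_le_pos; apply Rabs_pos | lra]. }
    unfold K in HxD. pose proof (Rabs_pos x). nra.
Qed.

Lemma add_sqrt_sub_lt0 (t d : R) : t < 0 -> 0 < d -> t + sqrt (t ^ 2 - 4 * d) < 0.
Proof.
  intros Ht Hd.
  destruct (Rle_or_lt 0 (t ^ 2 - 4 * d)) as [H | H].
  - pose proof (sqrt_sqrt _ H); pose proof (sqrt_pos (t ^ 2 - 4 * d)); nra.
  - rewrite sqrt_neg_0 by lra. lra.
Qed.

Lemma add_sqrt_sub_gt0 (t d : R) : d < 0 -> 0 < t + sqrt (t ^ 2 - 4 * d).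
Proof.
  intros Hd.
  assert (H : 0 <= t ^ 2 - 4 * d) by nra.
  pose proof (sqrt_sqrt _ H); pose proof (sqrt_pos (t ^ 2 - 4 * d)); nra.
Qed.

Lemma add_sqrt_sq (t : R) : t < 0 -> t + sqrt (t ^ 2 - 4 * 0) = 0.
Proof.
  intros Ht. replace (t ^ 2 - 4 * 0) with ((- t) ^ 2) by ring.
  rewrite sqrt_pow2; lra.
Qed.

(* Stdlib's [sqrt] is 0 on negative numbers, so both cases of [csqrt_real]
   fit one formula. *)
Lemma csqrt_real_sqrt (x : R) : csqrt_real x = (sqrt x, sqrt (- x)).
Proof.
  unfold csqrt_real. destruct (Rle_dec 0 x).
  - rewrite (sqrt_neg_0 (- x)); [reflexivity | lra].
  - rewrite (sqrt_neg_0 x); [reflexivity | lra].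
Qed.

Section Eigenvalues.

Variables mu1 mu2 alpha : R.

Definition detM (rho lam : R) : R :=
  (mu1 * rho + 1) * (mu2 * rho + alpha ^ 2) - lam * mu2 * rho.

Lemma discM_trM_detM (rho lam : R) :
  discM mu1 mu2 alpha rho lam = trM mu1 mu2 alpha rho lam ^ 2 - 4 * detM rho lam.
Proof. unfold discM, trM, detM. ring. Qed.

Lemma trM_lam1 (rho lam : R) : trM mu1 mu2 alpha rho lam = lam - lam1 mu1 mu2 alpha rho.
Proof. unfold trM, lam1. ring. Qed.

Lemma detM_lam0_fun (rho lam : R) : 0 < mu2 -> 0 < rho ->
  detM rho lam = mu2 * rho * (lam0_fun mu1 mu2 alpha rho - lam).
Proof. intros. unfold detM, lam0_fun. field. nra. Qed.

Lemma detM_gt0 (rho lam : R) : 0 < mu2 -> 0 < alpha -> 0 <= rho ->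
  (0 < rho -> lam < lam0_fun mu1 mu2 alpha rho) -> 0 < detM rho lam.
Proof.
  intros Hmu2 Ha Hrho Hlam.
  destruct (Rle_lt_or_eq_dec 0 rho Hrho) as [Hpos | <-].
  - rewrite detM_lam0_fun by assumption.
    specialize (Hlam Hpos). apply Rmult_lt_0_compat; nra.
  - unfold detM. nra.
Qed.

Lemma lam1_lt (r s : R) : 0 < mu1 -> 0 < mu2 -> r < s ->
  lam1 mu1 mu2 alpha r < lam1 mu1 mu2 alpha s.
Proof. intros. unfold lam1. nra. Qed.

Lemma lam1_le (r s : R) : 0 < mu1 -> 0 < mu2 -> r <= s ->
  lam1 mu1 mu2 alpha r <= lam1 mu1 mu2 alpha s.
Proof. intros. unfold lam1. nra. Qed.

Variables rho lam : R.

Notation tr := (trM mu1 mu2 alpha rho lam).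
Notation disc := (discM mu1 mu2 alpha rho lam).
Notation bp := (beta_plus mu1 mu2 alpha rho lam).
Notation bm := (beta_minus mu1 mu2 alpha rho lam).

Lemma Re_beta_plus : Re bp = (tr + sqrt disc) / 2.
Proof. unfold beta_plus. rewrite csqrt_real_sqrt. simpl. field. Qed.

Lemma Im_beta_plus : Im bp = sqrt (- disc) / 2.
Proof. unfold beta_plus. rewrite csqrt_real_sqrt. simpl. field. Qed.

Lemma Re_beta_minus : Re bm = (tr - sqrt disc) / 2.
Proof. unfold beta_minus. rewrite csqrt_real_sqrt. simpl. field. Qed.

Lemma Im_beta_minus : Im bm = - (sqrt (- disc) / 2).
Proof. unfold beta_minus. rewrite csqrt_real_sqrt. simpl. field. Qed.

Lemma Re_beta_minus_lt0 : tr < 0 -> Re bm < 0.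
Proof. intros. rewrite Re_beta_minus. pose proof (sqrt_pos disc). lra. Qed.

Lemma Re_beta_plus_lt0 : tr < 0 -> 0 < detM rho lam -> Re bp < 0.
Proof.
  intros. rewrite Re_beta_plus, discM_trM_detM.
  pose proof (add_sqrt_sub_lt0 tr (detM rho lam)). lra.
Qed.

Lemma Re_beta_plus_eq0 : tr < 0 -> detM rho lam = 0 -> Re bp = 0.
Proof.
  intros Ht Hd. rewrite Re_beta_plus, discM_trM_detM, Hd, add_sqrt_sq by exact Ht. lra.
Qed.

Lemma Re_beta_plus_gt0 : detM rho lam < 0 -> 0 < Re bp.
Proof.
  intros. rewrite Re_beta_plus, discM_trM_detM.
  pose proof (add_sqrt_sub_gt0 tr (detM rho lam)). lra.
Qed.

Lemma Re_beta_lt0 : tr < 0 -> 0 < detM rho lam -> Re bp < 0 /\ Re bm < 0.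
Proof. intros. split; [now apply Re_beta_plus_lt0 | now apply Re_beta_minus_lt0]. Qed.

Lemma Im_beta_plus_eq0 : 0 <= disc -> Im bp = 0.
Proof.
  intros. rewrite Im_beta_plus, sqrt_neg_0 by lra. lra.
Qed.

Lemma Im_beta_plus_neq0 : disc < 0 -> Im bp <> 0.
Proof. intros. rewrite Im_beta_plus. pose proof (sqrt_lt_R0 (- disc)). lra. Qed.

Lemma Re_beta_complex : disc < 0 -> Re bp = tr / 2 /\ Re bm = tr / 2.
Proof. intros. rewrite Re_beta_plus, Re_beta_minus, sqrt_neg_0 by lra. lra. Qed.

Lemma beta_plus_Cconj : disc < 0 -> bp = Cconj bm.
Proof.
  intros Hd. destruct (Re_beta_complex Hd) as [Hp Hm].
  apply injective_projections; simpl.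
  - change (Re bp = Re bm). lra.
  - change (Im bp = - Im bm). rewrite Im_beta_plus, Im_beta_minus. lra.
Qed.

End Eigenvalues.

Lemma growing_from_1_le (u : nat -> R) :
  (forall k, (1 <= k)%nat -> u k <= u (S k)) ->
  forall n k, (1 <= n)%nat -> (n <= k)%nat -> u n <= u k.
Proof.
  intros Hu n k Hn Hk. induction Hk as [| k Hk IH]; [lra|].
  specialize (Hu k ltac:(lia)). lra.
Qed.

Section Crossing.

Variables mu1 mu2 alpha : R.

Notation bp := (beta_plus mu1 mu2 alpha).
Notation bm := (beta_minus mu1 mu2 alpha).

(* At [lam0_fun r] we have [det = 0] and [tr < 0], so [disc = tr^2 - 4 det]
   is positive there and stays nonnegative nearby. *)
Lemma real_eigenvalue_crossing (r : R) : 0 < mu2 -> 0 < r ->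
  lam0_fun mu1 mu2 alpha r < lam1 mu1 mu2 alpha r ->
  let l0 := lam0_fun mu1 mu2 alpha r in
  exists delta, 0 < delta /\
    forall lam, Rabs (lam - l0) < delta ->
      Im (bp r lam) = 0 /\
      (lam < l0 -> Re (bp r lam) < 0) /\
      (lam = l0 -> Re (bp r lam) = 0) /\
      (l0 < lam -> 0 < Re (bp r lam)).
Proof.
  intros Hmu2 Hr Hlt l0.
  set (c := lam1 mu1 mu2 alpha r - l0).
  assert (Hc : 0 < c) by (unfold c, l0; lra).
  destruct (quadratic_lt_near_zero (2 * c - 4 * mu2 * r) (-1) (c ^ 2))
    as [delta [Hdelta Hnear]]; [nra|].
  exists delta; split; [exact Hdelta|].
  intros lam Hlam.
  assert (Htr : trM mu1 mu2 alpha r lam = lam - l0 - c)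
    by (rewrite trM_lam1; unfold c; ring).
  assert (Hdet : detM mu1 mu2 alpha r lam = mu2 * r * (l0 - lam))
    by (now apply detM_lam0_fun).
  assert (Hdisc : 0 <= discM mu1 mu2 alpha r lam).
  { specialize (Hnear _ Hlam).
    rewrite discM_trM_detM, Htr, Hdet. nra. }
  split; [now apply Im_beta_plus_eq0|].
  split; [|split].
  - intros Hl. apply Re_beta_plus_lt0; rewrite ?Htr, ?Hdet; [lra|].
    apply Rmult_lt_0_compat; nra.
  - intros ->. apply Re_beta_plus_eq0; rewrite ?Htr, ?Hdet; [lra | ring].
  - intros Hl. apply Re_beta_plus_gt0. rewrite Hdet.
    assert (0 < mu2 * r * (lam - l0)) by (apply Rmult_lt_0_compat; nra). lra.
Qed.

(* At [lam1 r] the trace vanishes while [det > 0], so [disc < 0] nearby. *)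
Lemma complex_eigenvalue_crossing (r : R) :
  0 < detM mu1 mu2 alpha r (lam1 mu1 mu2 alpha r) ->
  let l1 := lam1 mu1 mu2 alpha r in
  exists delta, 0 < delta /\
    forall lam, Rabs (lam - l1) < delta ->
      bp r lam = Cconj (bm r lam) /\
      Im (bp r lam) <> 0 /\
      Re (bp r lam) = Re (bm r lam) /\
      (lam < l1 -> Re (bp r lam) < 0) /\
      (lam = l1 -> Re (bp r lam) = 0) /\
      (l1 < lam -> 0 < Re (bp r lam)).
Proof.
  intros HD l1. fold l1 in HD.
  set (D := detM mu1 mu2 alpha r l1) in HD.
  destruct (quadratic_lt_near_zero (4 * mu2 * r) 1 (4 * D))
    as [delta [Hdelta Hnear]]; [lra|].
  exists delta; split; [exact Hdelta|].
  intros lam Hlam.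
  assert (Hdisc : discM mu1 mu2 alpha r lam < 0).
  { specialize (Hnear _ Hlam).
    assert (Hdet : detM mu1 mu2 alpha r lam = D - mu2 * r * (lam - l1))
      by (unfold D, detM; ring).
    rewrite discM_trM_detM, trM_lam1, Hdet. fold l1. nra. }
  destruct (Re_beta_complex _ _ _ _ _ Hdisc) as [Hp Hm].
  rewrite trM_lam1 in Hp, Hm. fold l1 in Hp, Hm.
  split; [now apply beta_plus_Cconj|].
  split; [now apply Im_beta_plus_neq0|].
  rewrite Hp, Hm. repeat split; intros; lra.
Qed.

End Crossing.

Theorem lemma3p1 (bc : BC) (mu1 mu2 alpha : R) (rho : nat -> R) :
  0 < mu1 -> 0 < mu2 -> 0 < alpha ->
  laplace_spectrum bc rho ->
  (forall k0 : nat, (1 <= k0)%nat -> 0 < rho k0 ->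
     (forall k, (1 <= k)%nat -> 0 < rho k ->
        lam0_fun mu1 mu2 alpha (rho k0) <= lam0_fun mu1 mu2 alpha (rho k)) ->
     (forall k, (1 <= k)%nat -> 0 < rho k ->
        lam0_fun mu1 mu2 alpha (rho k) = lam0_fun mu1 mu2 alpha (rho k0) ->
        rho k = rho k0) ->
     lam0_fun mu1 mu2 alpha (rho k0) < lam1 mu1 mu2 alpha (rho 1%nat) ->
     let lam0 := lam0_fun mu1 mu2 alpha (rho k0) in
     (exists delta, 0 < delta /\
        forall lam, 0 < lam -> Rabs (lam - lam0) < delta ->
        forall k, (1 <= k)%nat -> rho k = rho k0 ->
          Im (beta_plus mu1 mu2 alpha (rho k) lam) = 0 /\
          (lam < lam0 -> Re (beta_plus mu1 mu2 alpha (rho k) lam) < 0) /\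
          (lam = lam0 -> Re (beta_plus mu1 mu2 alpha (rho k) lam) = 0) /\
          (lam0 < lam -> 0 < Re (beta_plus mu1 mu2 alpha (rho k) lam))) /\
     (forall j, (1 <= j)%nat -> rho j <> rho k0 ->
        Re (beta_plus mu1 mu2 alpha (rho j) lam0) < 0 /\
        Re (beta_minus mu1 mu2 alpha (rho j) lam0) < 0) /\
     (forall k, (1 <= k)%nat -> rho k = rho k0 ->
        Re (beta_minus mu1 mu2 alpha (rho k) lam0) < 0))
  /\
  ((forall k, (1 <= k)%nat -> 0 < rho k ->
      lam1 mu1 mu2 alpha (rho 1%nat) < lam0_fun mu1 mu2 alpha (rho k)) ->
     let l1 := lam1 mu1 mu2 alpha (rho 1%nat) in
     (exists delta, 0 < delta /\
        forall lam, 0 < lam -> Rabs (lam - l1) < delta ->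
          beta_plus mu1 mu2 alpha (rho 1%nat) lam
            = Cconj (beta_minus mu1 mu2 alpha (rho 1%nat) lam) /\
          Im (beta_plus mu1 mu2 alpha (rho 1%nat) lam) <> 0 /\
          Re (beta_plus mu1 mu2 alpha (rho 1%nat) lam)
            = Re (beta_minus mu1 mu2 alpha (rho 1%nat) lam) /\
          (lam < l1 -> Re (beta_plus mu1 mu2 alpha (rho 1%nat) lam) < 0) /\
          (lam = l1 -> Re (beta_plus mu1 mu2 alpha (rho 1%nat) lam) = 0) /\
          (l1 < lam -> 0 < Re (beta_plus mu1 mu2 alpha (rho 1%nat) lam))) /\
     (forall k, (1 < k)%nat ->
        Re (beta_plus mu1 mu2 alpha (rho k) l1) < 0 /\
        Re (beta_minus mu1 mu2 alpha (rho k) l1) < 0)).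
Proof.
  intros Hmu1 Hmu2 Ha [Hnonneg [Hgrow [H12 _]]].
  pose proof (growing_from_1_le rho Hgrow) as Hle.
  split.
  - intros k0 Hk0 Hr0 Hmin Huniq Hlt lam0. fold lam0 in Hmin, Huniq, Hlt.
    assert (Hlam1 : lam0 < lam1 mu1 mu2 alpha (rho k0)).
    { pose proof (lam1_le mu1 mu2 alpha _ _ Hmu1 Hmu2 (Hle 1%nat k0 (le_n _) Hk0)). lra. }
    split; [|split].
    + destruct (real_eigenvalue_crossing mu1 mu2 alpha (rho k0) Hmu2 Hr0 Hlam1)
        as [delta [Hdelta Hcross]].
      exists delta; split; [exact Hdelta|].
      intros lam _ Hlam k _ ->. exact (Hcross lam Hlam).
    + intros j Hj Hne. apply Re_beta_lt0.
      * pose proof (lam1_le mu1 mu2 alpha _ _ Hmu1 Hmu2 (Hle 1%nat j (le_n _) Hj)).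
        rewrite trM_lam1. lra.
      * apply detM_gt0; [exact Hmu2 | exact Ha | now apply Hnonneg |].
        intros Hpos. destruct (Rle_lt_or_eq_dec _ _ (Hmin j Hj Hpos)) as [Hlt' | Heq];
          [exact Hlt' | contradict Hne; apply Huniq; auto].
    + intros k _ ->. apply Re_beta_minus_lt0. rewrite trM_lam1. lra.
  - intros Hl1 l1. split.
    + destruct (complex_eigenvalue_crossing mu1 mu2 alpha (rho 1%nat)) as [delta [Hdelta Hcross]].
      { apply detM_gt0; [exact Hmu2 | exact Ha | now apply Hnonneg |].
        now apply Hl1. }
      exists delta; split; [exact Hdelta|].
      intros lam _ Hlam. exact (Hcross lam Hlam).
    + intros k Hk.
      assert (H1k : rho 1%nat < rho k) by (pose proof (Hle 2%nat k ltac:(lia) Hk); lra).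
      assert (Hpos : 0 < rho k) by (pose proof (Hnonneg 1%nat (le_n _)); lra).
      apply Re_beta_lt0.
      * pose proof (lam1_lt mu1 mu2 alpha _ _ Hmu1 Hmu2 H1k). rewrite trM_lam1. unfold l1. lra.
      * apply detM_gt0; [exact Hmu2 | exact Ha | lra |]. intros _. apply Hl1; [lia | exact Hpos].
Qed.
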